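(* Let $L$ be a lattice. The following are equivalent: (i) $L$ is distributive; (ii) $M_3[L]$ is a modular lattice; (iii) $M_3[L]$ is an Arguesian lattice. Moreover, if these conditions hold, then for every field $\mathbb{F}$ the lattice $M_3[L]$ can be embedded into the lattice of all subspaces of some vector space over $\mathbb{F}$.
   Context: A triple $(a,b,c)\in L^3$ is balanced if $a\wedge b=a\wedge c=b\wedge c$; $M_3[L]$ is the set of balanced triples, ordered componentwise (Schmidt's $M_3[L]$ construction). When $L$ is distributive, $M_3[L]$ is a lattice with componentwise meet and join $(a,b,c)\vee(a',b',c')=\overline{(a\vee a',b\vee b',c\vee c')}$, where $\overline{(a,b,c)}=(a\vee(b\wedge c),\,b\vee(a\wedge c),\,c\vee(a\wedge b))$. A lattice is Arguesian if it satisfies the Arguesian identity (the lattice-theoretic form of Desargues' theorem, satisfied by subspace lattices of vector spaces). *)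

From HB Require Import structures.
From mathcomp Require Import all_boot all_order all_algebra.
Set Implicit Arguments. Unset Strict Implicit. Unset Printing Implicit Defensive.
Import Order.TTheory GRing.Theory.
Local Open Scope order_scope.

Definition is_lub {T : Type} (le : T -> T -> Prop) (x y s : T) : Prop :=
  le x s /\ le y s /\ forall u, le x u -> le y u -> le s u.

Definition is_glb {T : Type} (le : T -> T -> Prop) (x y m : T) : Prop :=
  le m x /\ le m y /\ forall u, le u x -> le u y -> le u m.

Definition lattice_ops {T : Type} (le : T -> T -> Prop)
    (join meet : T -> T -> T) : Prop :=
  (forall x y, is_lub le x y (join x y)) /\ (forall x y, is_glb le x y (meet x y)).

Definition modular_identity {T : Type} (le : T -> T -> Prop)
    (join meet : T -> T -> T) : Prop :=
  forall x y z, le x z -> join x (meet y z) = meet (join x y) z.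

Definition arguesian_identity {T : Type} (le : T -> T -> Prop)
    (join meet : T -> T -> T) : Prop :=
  forall a0 a1 a2 b0 b1 b2 : T,
    let c0 := meet (join a1 a2) (join b1 b2) in
    let c1 := meet (join a0 a2) (join b0 b2) in
    let c2 := meet (join a0 a1) (join b0 b1) in
    let c := meet c2 (join c0 c1) in
    le (meet (meet (join a0 b0) (join a1 b1)) (join a2 b2))
       (join a0 (meet b0 (join c b1))).

Definition is_modular_lattice {T : Type} (le : T -> T -> Prop) : Prop :=
  exists join meet, lattice_ops le join meet /\ modular_identity le join meet.

Definition is_arguesian_lattice {T : Type} (le : T -> T -> Prop) : Prop :=
  exists join meet, lattice_ops le join meet /\ arguesian_identity le join meet.

Definition distributive_lattice {d : Order.disp_t} (L : latticeType d) : Prop :=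
  forall x y z : L, x `&` (y `|` z) = (x `&` y) `|` (x `&` z).

Definition balanced {d : Order.disp_t} {L : latticeType d} (t : L * L * L) : bool :=
  (t.1.1 `&` t.1.2 == t.1.1 `&` t.2) && (t.1.1 `&` t.2 == t.1.2 `&` t.2).

Definition M3 {d : Order.disp_t} (L : latticeType d) : Type :=
  {t : L * L * L | balanced t}.

Definition M3_le {d : Order.disp_t} {L : latticeType d} (x y : M3 L) : Prop :=
  [/\ (sval x).1.1 <= (sval y).1.1, (sval x).1.2 <= (sval y).1.2
    & (sval x).2 <= (sval y).2].

Definition is_subspace {F : fieldType} {V : lmodType F} (S : V -> Prop) : Prop :=
  S 0%R /\ forall (a : F) (u v : V), S u -> S v -> S (a *: u + v)%R.

Definition subspace_sum {F : fieldType} {V : lmodType F} (S T : V -> Prop) : V -> Prop :=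
  fun v => exists u w, S u /\ T w /\ v = (u + w)%R.

Definition subspace_meet {F : fieldType} {V : lmodType F} (S T : V -> Prop) : V -> Prop :=
  fun v => S v /\ T v.

Definition same_set {V : Type} (S T : V -> Prop) : Prop := forall v, S v <-> T v.

Definition subspace_lattice_embedding {T : Type} (le : T -> T -> Prop)
    {F : fieldType} {V : lmodType F} (f : T -> V -> Prop) : Prop :=
  (forall x, is_subspace (f x)) /\
  (forall x y, same_set (f x) (f y) -> x = y) /\
  (forall x y s, is_lub le x y s -> same_set (f s) (subspace_sum (f x) (f y))) /\
  (forall x y m, is_glb le x y m -> same_set (f m) (subspace_meet (f x) (f y))).

(* Distributive lattices are separated by their homomorphisms onto the
   two-element lattice 2 (complements of prime ideals, from Zorn's lemma), so
   identities of distributive lattices can be checked in 2.  Applied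
   componentwise, these homomorphisms embed M3[L] into a power of
   M3[2] = M_3, preserving joins and meets.  The lattice M_3 is Arguesian
   (checked by evaluation) and is isomorphic to the lattice formed by 0, the
   two axes, the diagonal and the whole of F^2; hence M3[L] is Arguesian,
   therefore modular, and embeds into the subspaces of a power of F^2.
   Conversely, if M3[L] is modular then so is L (diagonal triples), and
   modularity at (v,v,a) <= (v,b,a) against (a,c,v), where v = a & b, shows
   that every balanced triple (a,b,c) satisfies (a | c) & b <= v: L contains
   no diamond M_3.  A modular lattice without diamond is distributive. *)

From HB Require Import structures.
From mathcomp Require Import all_boot all_order all_algebra.
From mathcomp Require Import boolp classical_sets functions.
Set Implicit Arguments. Unset Strict Implicit. Unset Printing Implicit Defensive.
Import Order.TTheory GRing.Theory.
Local Open Scope order_scope.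

Section PosetBounds.
Context {T : Type} (le : T -> T -> Prop).
Hypothesis le_reflexive : forall x, le x x.
Hypothesis le_transitive : forall x y z, le x y -> le y z -> le x z.
Hypothesis le_antisymmetric : forall x y, le x y -> le y x -> x = y.

Lemma is_lub_uniq x y s s' : is_lub le x y s -> is_lub le x y s' -> s = s'.
Proof.
by move=> [xs [ys sl]] [xs' [ys' sl']]; apply: le_antisymmetric; [apply: sl | apply: sl'].
Qed.

Lemma is_glb_uniq x y m m' : is_glb le x y m -> is_glb le x y m' -> m = m'.
Proof.
by move=> [mx [my gm]] [mx' [my' gm']]; apply: le_antisymmetric; [apply: gm' | apply: gm].
Qed.

Lemma is_lub_of_le x y s : le x y -> is_lub le x y s -> s = y.
Proof. by move=> xy [_ [ys sl]]; apply: le_antisymmetric => //; apply: sl. Qed.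

Lemma arguesian_modular join meet :
  lattice_ops le join meet -> arguesian_identity le join meet ->
  modular_identity le join meet.
Proof.
move=> [lubJ glbM] arg x y z xz.
have joinl u v : le u (join u v) by case: (lubJ u v).
have joinr u v : le v (join u v) by case: (lubJ u v) => _ [].
have meetl u v : le (meet u v) u by case: (glbM u v).
have meetr u v : le (meet u v) v by case: (glbM u v) => _ [].
have joinK u v : le u v -> join u v = v by move=> uv; exact: is_lub_of_le uv (lubJ u v).
apply: le_antisymmetric.
  have [_ [_ lub]] := lubJ x (meet y z); have [_ [_ glb]] := glbM (join x y) z.
  apply: lub; apply: glb; [exact: joinl | exact: xz | | exact: meetr].
  exact: le_transitive (meetl _ _) (joinr _ _).
pose t := join (join x y) z.
(* The triangles (x, z, t) and (y, z, t): with t = x | y | z most joins collapse. *)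
have := arg x z t y z t; rewrite /= (joinK x z xz) !(joinK _ _ (le_reflexive _)).
set c := meet (meet z _) _; rewrite (joinK c z); last exact: le_transitive (meetl _ _) (meetl _ _).
apply: le_transitive; have [_ [_ g]] := glbM (meet (join x y) z) t.
by apply: g => //; exact: le_transitive (meetr _ _) (joinr _ _).
Qed.

End PosetBounds.

Section PowerEmbedding.
Context {T U I : Type} (leT : T -> T -> Prop) (joinT meetT : T -> T -> T).
Context (leU : U -> U -> Prop) (joinU meetU : U -> U -> U) (phi : I -> T -> U).
Hypothesis phi_join : forall i x y, phi i (joinT x y) = joinU (phi i x) (phi i y).
Hypothesis phi_meet : forall i x y, phi i (meetT x y) = meetU (phi i x) (phi i y).
Hypothesis phi_reflect : forall x y, (forall i, leU (phi i x) (phi i y)) -> leT x y.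

Lemma arguesian_of_power_embedding :
  arguesian_identity leU joinU meetU -> arguesian_identity leT joinT meetT.
Proof.
move=> argU a0 a1 a2 b0 b1 b2 /=; apply: phi_reflect => i.
by rewrite !(phi_join, phi_meet); exact: argU.
Qed.

Hypothesis leT_anti : forall x y, leT x y -> leT y x -> x = y.
Hypothesis opsT : lattice_ops leT joinT meetT.
Hypothesis opsU : lattice_ops leU joinU meetU.

Local Open Scope ring_scope.

Variables (F : fieldType) (W : lmodType F) (g : U -> W -> Prop).
Hypothesis g_emb : subspace_lattice_embedding leU g.

Let g_subspace u : is_subspace (g u) := proj1 g_emb u.

Let g_join u u' w : g (joinU u u') w <-> subspace_sum (g u) (g u') w :=
  proj1 (proj2 (proj2 g_emb)) u u' _ (proj1 opsU u u') w.

Let g_meet u u' w : g (meetU u u') w <-> g u w /\ g u' w :=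
  proj2 (proj2 (proj2 g_emb)) u u' _ (proj2 opsU u u') w.

Lemma subspace_embedding_le u u' : (forall w, g u w -> g u' w) -> leU u u'.
Proof.
move=> gle; have [_ [glb_u' _]] := proj2 opsU u u'.
suff <- : meetU u u' = u by [].
apply: (proj1 (proj2 g_emb)) => w; rewrite g_meet.
by split=> [[]//| gw]; split=> //; exact: gle.
Qed.

Definition power_subspace (x : T) : (I -> W) -> Prop :=
  fun v => forall i, g (phi i x) (v i).

Lemma power_subspace_le x y :
  (forall v, power_subspace x v -> power_subspace y v) -> leT x y.
Proof.
move=> fle; apply: phi_reflect => i; apply: subspace_embedding_le => w gw.
pose v j := if `[< j = i >] then w else 0.
have /fle/(_ i) : power_subspace x v.
  by move=> j; rewrite /v; case: asboolP => [-> //|_]; case: (g_subspace (phi j x)).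
by rewrite /v asboolT.
Qed.

Lemma subspace_embedding_of_power_embedding : subspace_lattice_embedding leT power_subspace.
Proof.
split; [|split; [|split]].
- move=> x; split=> [i|a u v fu fv i]; first by case: (g_subspace (phi i x)).
  by case: (g_subspace (phi i x)) => _; apply.
- by move=> x y exy; apply: leT_anti; apply: power_subspace_le => v /exy.
- move=> x y s /(is_lub_uniq leT_anti (proj1 opsT x y)) <- v; split=> [fv|].
    have /choice[u fu] i : exists p, g (phi i x) p /\ g (phi i y) (v i - p).
      have := fv i; rewrite phi_join => /g_join[p [q [gp [gq ->]]]].
      by exists p; rewrite addrC addKr.
    exists u, (v - u); split; [|split]; [by move=> i; case: (fu i)..|].
    by rewrite addrC subrK.
  move=> [u [w [fu [fw ->]]]] i; rewrite phi_join; apply/g_join.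
  by exists (u i), (w i).
- move=> x y m /(is_glb_uniq leT_anti (proj2 opsT x y)) <- v; split=> [fv|[fx fy] i].
    by split=> i; have := fv i; rewrite phi_meet => /g_meet[].
  by rewrite phi_meet; apply/g_meet.
Qed.

End PowerEmbedding.

Definition bool_morph {d : Order.disp_t} {L : latticeType d} (h : L -> bool) :=
  {morph h : x y / x `&` y} /\ {morph h : x y / x `|` y}.

Section PrimeIdeals.
Context {d : Order.disp_t} {L : latticeType d}.
Hypothesis distrL : distributive_lattice L.

Lemma joinIr_distr (x y z : L) : x `|` (y `&` z) = (x `|` y) `&` (x `|` z).
Proof.
rewrite (distrL (x `|` y)) (meetC _ x) (meet_idPl (leUl x y)) (meetC (x `|` y) z) (distrL z).
by rewrite joinA meetKUC meetC.
Qed.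

Section MaximalIdeal.
Variables a b : L.
Hypothesis a_nle_b : ~~ (a <= b).

(* The last clause admits the empty set, which Zorn's lemma needs as the
   union of the empty chain. *)
Definition sep_ideal (S : set L) :=
  [/\ forall x y, S y -> x <= y -> S x, forall x y, S x -> S y -> S (x `|` y),
      ~ S a & forall x, S x -> S b].

Lemma sep_ideal_bigcup (C : set (set L)) :
  (C `<=` sep_ideal)%classic -> total_on C subset ->
  sep_ideal (\bigcup_(S in C) S)%classic.
Proof.
move=> Cideal Ctot; split.
- move=> x y [S CS Sy] xy; exists S => //.
  by have [down _ _ _] := Cideal S CS; exact: down xy.
- move=> x y [S CS Sx] [S' CS' S'y].
  have [SS'|S'S] := Ctot S S' CS CS'.
    by exists S' => //; have [_ join _ _] := Cideal S' CS'; apply: join (SS' x Sx) S'y.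
  by exists S => //; have [_ join _ _] := Cideal S CS; apply: join Sx (S'S y S'y).
- by move=> [S CS Sa]; case: (Cideal S CS).
- by move=> x [S CS Sx]; exists S => //; have [_ _ _ Sb] := Cideal S CS; exact: Sb Sx.
Qed.

Variable A : set L.
Hypothesis A_ideal : sep_ideal A.
Hypothesis A_max : forall B, (A `<` B)%classic -> ~ sep_ideal B.

Lemma max_sep_ideal_b : A b.
Proof.
have [_ _ _ Ab] := A_ideal; apply: contrapT => nAb.
apply: (A_max (B := fun z => z <= b)).
  by split=> [z /Ab //|]; apply: contra_not nAb; apply.
split=> [x y yb xy | x y xb yb | ab |//]; first exact: le_trans xy yb.
  by rewrite leUx xb.
by move: a_nle_b; rewrite ab.
Qed.

Lemma max_sep_ideal_extend w : ~ A w -> exists2 i, A i & a <= i `|` w.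
Proof.
move=> nAw; apply: contrapT => nex; have [down join _ _] := A_ideal.
apply: (A_max (B := fun z => exists2 i, A i & z <= i `|` w)).
  split=> [z Az|]; first by exists z => //; exact: leUl.
  by apply: contra_not nAw; apply; exists b; [exact: max_sep_ideal_b | exact: leUr].
split=> [x y [i Ai yi] xy | x y [i Ai xi] [j Aj yj] | // | x _].
- by exists i => //; exact: le_trans xy yi.
- exists (i `|` j); first exact: join.
  rewrite leUx; apply/andP; split; [apply: le_trans xi _ | apply: le_trans yj _].
    by rewrite leU2 ?leUl.
  by rewrite leU2 ?leUr.
- by exists b; [exact: max_sep_ideal_b | exact: leUl].
Qed.

Lemma max_sep_ideal_prime x y : A (x `&` y) -> A x \/ A y.
Proof.
move=> Axy; apply: contrapT => /not_orP[nAx nAy]; have [down join nAa _] := A_ideal.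
have [i Ai ai] := max_sep_ideal_extend nAx; have [j Aj aj] := max_sep_ideal_extend nAy.
apply: nAa; apply: (down _ ((i `|` j) `|` (x `&` y))); first exact: join _ _ (join _ _ Ai Aj) Axy.
rewrite joinIr_distr lexI; apply/andP; split; [apply: le_trans ai _ | apply: le_trans aj _].
  by rewrite leU2 ?leUl.
by rewrite leU2 ?leUr.
Qed.

Lemma max_sep_ideal_morph : bool_morph (fun z => ~~ `[< A z >]).
Proof.
have [down join _ _] := A_ideal; split=> x y.
  have -> : A (x `&` y) = (A x \/ A y).
    rewrite propeqE; split=> [|[] Az]; first exact: max_sep_ideal_prime.
      exact: down _ _ Az (leIl _ _).
    exact: down _ _ Az (leIr _ _).
  by rewrite asbool_or negb_or.
have -> : A (x `|` y) = (A x /\ A y).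
  rewrite propeqE; split=> [Axy|[Ax Ay]]; last exact: join _ _ Ax Ay.
  by split; [exact: down _ _ Axy (leUl _ _) | exact: down _ _ Axy (leUr _ _)].
by rewrite asbool_and negb_and.
Qed.

End MaximalIdeal.

Lemma bool_morph_sep (a b : L) :
  ~~ (a <= b) -> exists h : L -> bool, [/\ bool_morph h, h a & ~~ h b].
Proof.
move=> a_nle_b; have [A [A_ideal A_max]] := Zorn_bigcup (@sep_ideal_bigcup a b).
exists (fun z => ~~ `[< A z >]); split; first exact: max_sep_ideal_morph A_ideal A_max.
  by apply/asboolPn; case: A_ideal.
by rewrite negbK; apply/asboolP; exact: max_sep_ideal_b A_ideal A_max.
Qed.

Lemma bool_morph_le (x y : L) :
  (forall h, bool_morph h -> h x <= h y) -> x <= y.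
Proof.
move=> sep; apply: contraT => /bool_morph_sep[h [hm hx /negbTE hy]].
by have := sep h hm; rewrite hx hy.
Qed.

Lemma bool_morph_inj (x y : L) :
  (forall h, bool_morph h -> h x = h y) -> x = y.
Proof.
by move=> sep; apply/le_anti/andP; split; apply: bool_morph_le => h /sep ->.
Qed.

End PrimeIdeals.

Lemma balancedP {d : Order.disp_t} {L : latticeType d} (t : L * L * L) :
  reflect (t.1.1 `&` t.1.2 = t.1.1 `&` t.2 /\ t.1.1 `&` t.2 = t.1.2 `&` t.2) (balanced t).
Proof. by apply: (iffP andP) => -[/eqP-> /eqP->]. Qed.

Section Triples.
Context {d : Order.disp_t} {L : latticeType d}.
Implicit Types s t u : L * L * L.

Definition tle s t := [&& s.1.1 <= t.1.1, s.1.2 <= t.1.2 & s.2 <= t.2].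

Definition tmeet s t := (s.1.1 `&` t.1.1, s.1.2 `&` t.1.2, s.2 `&` t.2).

Definition tclosure t :=
  (t.1.1 `|` (t.1.2 `&` t.2), t.1.2 `|` (t.1.1 `&` t.2), t.2 `|` (t.1.1 `&` t.1.2)).

Definition tjoin s t := tclosure (s.1.1 `|` t.1.1, s.1.2 `|` t.1.2, s.2 `|` t.2).

Lemma tle_refl t : tle t t.
Proof. by rewrite /tle !lexx. Qed.

Lemma tle_trans s t u : tle s t -> tle t u -> tle s u.
Proof.
move=> /and3P[st1 st2 st3] /and3P[tu1 tu2 tu3].
by apply/and3P; split;
  [exact: le_trans st1 tu1 | exact: le_trans st2 tu2 | exact: le_trans st3 tu3].
Qed.

Lemma tle_anti s t : tle s t -> tle t s -> s = t.
Proof.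
case: s t => [[s1 s2] s3] [[t1 t2] t3] /and3P[/= st1 st2 st3] /and3P[/= ts1 ts2 ts3].
by congr (_, _, _); apply/le_anti/andP; split.
Qed.

Lemma balanced_tmeet s t : balanced s -> balanced t -> balanced (tmeet s t).
Proof.
move=> /balancedP[s12 s23] /balancedP[t12 t23]; apply/balancedP => /=.
by split; rewrite meetACA; [rewrite s12 t12 | rewrite s23 t23]; rewrite meetACA.
Qed.

Lemma tle_tmeet s t : tle (tmeet s t) s /\ tle (tmeet s t) t.
Proof. by rewrite /tle !leIl !leIr. Qed.

Lemma tle_tclosure t : tle t (tclosure t).
Proof. by rewrite /tle !leUl. Qed.

Lemma tle_tjoin s t : tle s (tjoin s t) /\ tle t (tjoin s t).
Proof.
by split; apply: (tle_trans (t := (s.1.1 `|` t.1.1, s.1.2 `|` t.1.2, s.2 `|` t.2)));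
  rewrite ?tle_tclosure // /tle /= ?leUl ?leUr.
Qed.

Lemma tclosure_le t u : balanced u -> tle t u -> tle (tclosure t) u.
Proof.
move=> /balancedP[u12 u23] /and3P[tu1 tu2 tu3]; apply/and3P; split=> /=;
  rewrite leUx ?tu1 ?tu2 ?tu3 //=.
- by apply: le_trans (leI2 tu2 tu3) _; rewrite -u23 -u12 leIl.
- by apply: le_trans (leI2 tu1 tu3) _; rewrite -u12 leIr.
- by apply: le_trans (leI2 tu1 tu2) _; rewrite u12 leIr.
Qed.

Lemma tjoin_le s t u : balanced u -> tle s u -> tle t u -> tle (tjoin s t) u.
Proof.
move=> bu /and3P[su1 su2 su3] /and3P[tu1 tu2 tu3]; apply: tclosure_le bu _.
by apply/and3P; rewrite /= !leUx su1 su2 su3 tu1 tu2 tu3.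
Qed.

Lemma balanced_tclosure (distrL : distributive_lattice L) t : balanced (tclosure t).
Proof.
apply/balancedP; split; apply: (bool_morph_inj distrL) => h [hI hU] /=;
  by rewrite !(hI, hU); move: (h t.1.1) (h t.1.2) (h t.2) => [] [] [].
Qed.

Definition tmap (h : L -> bool) t := (h t.1.1, h t.1.2, h t.2).

End Triples.

Section BoolMorph.
Context {d : Order.disp_t} {L : latticeType d} (h : L -> bool).
Hypothesis hm : bool_morph h.

Lemma balanced_tmap t : balanced t -> balanced (tmap h t).
Proof. by case: hm => hI _ /balancedP[e1 e2]; apply/balancedP; rewrite /= -!hI e1 e2. Qed.

Lemma tmap_tmeet s t : tmap h (tmeet s t) = tmeet (tmap h s) (tmap h t).
Proof. by case: hm => hI _; rewrite /tmap /= !hI. Qed.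

Lemma tmap_tjoin s t : tmap h (tjoin s t) = tjoin (tmap h s) (tmap h t).
Proof. by case: hm => hI hU; rewrite /tmap /= !(hI, hU). Qed.

End BoolMorph.

Lemma tle_sep {d : Order.disp_t} {L : latticeType d} (distrL : distributive_lattice L)
    (s t : L * L * L) :
  (forall h, bool_morph h -> tle (tmap h s) (tmap h t)) -> tle s t.
Proof.
move=> sep; apply/and3P; split; apply: (bool_morph_le distrL) => h /sep;
  by case/and3P.
Qed.

(* Search for a proof of an inequality between lattice terms valid in every
   lattice, in the style of Whitman's solution of the word problem. *)
Ltac lattice_le := solve [ match goal with
 | |- is_true (_ `|` _ <= _) => rewrite leUx; apply/andP; split; lattice_le
 | |- is_true (_ <= _ `&` _) => rewrite lexI; apply/andP; split; lattice_le
 | |- is_true (?a <= ?a) => exact: lexx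
 | |- is_true (?a `&` ?b <= ?c `|` ?e) =>
      first [ apply: (le_trans (leIl a b)); lattice_le
            | apply: (le_trans (leIr b a)); lattice_le
            | apply: (le_trans _ (leUl c e)); lattice_le
            | apply: (le_trans _ (leUr e c)); lattice_le ]
 | |- is_true (?a `&` ?b <= _) =>
      first [ apply: (le_trans (leIl a b)); lattice_le
            | apply: (le_trans (leIr b a)); lattice_le ]
 | |- is_true (_ <= ?c `|` ?e) =>
      first [ apply: (le_trans _ (leUl c e)); lattice_le
            | apply: (le_trans _ (leUr e c)); lattice_le ]
 | |- _ => assumption
 end ].

(* The atoms a, b, c of a diamond M_3 form a balanced triple with
   (a | c) & b = b. *)
Definition diamond_free {d : Order.disp_t} (L : latticeType d) :=
  forall a b c : L, balanced (a, b, c) -> (a `|` c) `&` b <= a `&` b.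

Section ModularDiamondFree.
Context {d : Order.disp_t} {L : latticeType d}.
Hypothesis modL : modular_identity (fun x y : L => x <= y) Order.join Order.meet.

Definition meet_median (x y z : L) := (x `&` y) `|` (y `&` z) `|` (z `&` x).
Definition join_median (x y z : L) := (x `|` y) `&` (y `|` z) `&` (z `|` x).

Lemma meet_median_perm x y z :
  meet_median x z y = meet_median x y z /\ meet_median y z x = meet_median x y z.
Proof. by split; apply/le_anti/andP; split; rewrite /meet_median; lattice_le. Qed.

Lemma join_median_perm x y z :
  join_median x z y = join_median x y z /\ join_median y z x = join_median x y z.
Proof. by split; apply/le_anti/andP; split; rewrite /join_median; lattice_le. Qed.

(* Dedekind's construction: the elements [(x `&` u) `|` v] for the medians
   [u] and [v] pairwise meet in [v] and pairwise join in [u]. *)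
Lemma median_diamond x y z (u := join_median x y z) (v := meet_median x y z) :
  ((x `&` u) `|` v) `&` ((y `&` u) `|` v) <= v /\
  u <= ((x `&` u) `|` v) `|` ((y `&` u) `|` v).
Proof.
split.
  rewrite (joinC (x `&` u)) -(@modL v (x `&` u) ((y `&` u) `|` v) (leUr _ _)) leUx lexx /=.
  apply: (le_trans (y := ((z `&` x) `|` (y `&` u)) `&` x)).
    by rewrite /u /v /join_median /meet_median; lattice_le.
  by rewrite -(@modL (z `&` x) (y `&` u) x) /v /meet_median; lattice_le.
apply: (le_trans (y := ((y `&` u) `|` x) `&` u)).
  rewrite lexI lexx andbT; apply: (le_trans (y := x `|` (y `&` (x `|` z)))).
    by rewrite (@modL x y (x `|` z)) /u /join_median; lattice_le.
  by rewrite /u /join_median; lattice_le.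
by rewrite -(@modL (y `&` u) x u); lattice_le.
Qed.

Lemma diamond_free_distributive : diamond_free L -> distributive_lattice L.
Proof.
move=> noM3 x y z; apply/le_anti/andP; split; last by lattice_le.
have [xy_v xy_u] := median_diamond x y z.
have [xz_v xz_u] := median_diamond x z y.
have [yz_v yz_u] := median_diamond y z x.
have [mxzy myzx] := meet_median_perm x y z; have [jxzy jyzx] := join_median_perm x y z.
rewrite mxzy jxzy in xz_v xz_u; rewrite myzx jyzx in yz_v yz_u.
move: xy_v xy_u xz_v xz_u yz_v yz_u.
set v := meet_median x y z; set u := join_median x y z.
set x1 := (x `&` u) `|` v; set y1 := (y `&` u) `|` v; set z1 := (z `&` u) `|` v.
move=> xy_v xy_u xz_v xz_u yz_v yz_u.
have vu : v <= u by rewrite /v /u /meet_median /join_median; lattice_le.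
have v_le (w : L) : v <= (w `&` u) `|` v by exact: leUr.
have y1u : y1 <= u by rewrite leUx vu leIr.
have meet_v (a b : L) : a `&` b <= v -> v <= a -> v <= b -> a `&` b = v.
  by move=> abv va vb; apply/le_anti; rewrite abv lexI va vb.
have xy1 := meet_v _ _ xy_v (v_le x) (v_le y).
have xz1 := meet_v _ _ xz_v (v_le x) (v_le z).
have yz1 := meet_v _ _ yz_v (v_le y) (v_le z).
have /noM3 : balanced (x1, y1, z1) by apply/balancedP; rewrite /= xy1 xz1 yz1.
rewrite xy1 => x1z1_y1.
have y1v : y1 <= v by apply: le_trans x1z1_y1; rewrite lexI lexx (le_trans y1u xz_u).
have ux1 : u <= x1 by apply: le_trans xy_u _; rewrite leUx lexx (le_trans y1v (v_le x)).
have uz1 : u <= z1 by apply: le_trans yz_u _; rewrite leUx lexx (le_trans y1v (v_le z)).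
have uv : u <= v by rewrite -xz1 lexI ux1 uz1.
apply: (le_trans (y := ((x `&` y) `|` (z `&` x) `|` (y `&` z)) `&` x)).
  rewrite lexI leIl andbT; apply: (le_trans (y := v)); last by rewrite /v /meet_median; lattice_le.
  by apply: le_trans uv; rewrite /u /join_median; lattice_le.
by rewrite -(@modL ((x `&` y) `|` (z `&` x)) (y `&` z) x); lattice_le.
Qed.

End ModularDiamondFree.

Section M3Lattice.
Context {d : Order.disp_t} {L : latticeType d}.
Implicit Types x y z : M3 L.

Lemma M3_leP x y : reflect (M3_le x y) (tle (sval x) (sval y)).
Proof. exact: and3P. Qed.

Lemma M3_inj x y : sval x = sval y -> x = y.
Proof. exact: val_inj. Qed.

Lemma M3_le_refl x : M3_le x x.
Proof. exact/M3_leP/tle_refl. Qed.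

Lemma M3_le_trans x y z : M3_le x y -> M3_le y z -> M3_le x z.
Proof. by move=> /M3_leP xy /M3_leP yz; apply/M3_leP; exact: tle_trans xy yz. Qed.

Lemma M3_le_anti x y : M3_le x y -> M3_le y x -> x = y.
Proof. by move=> /M3_leP xy /M3_leP yx; apply/M3_inj/tle_anti. Qed.

Definition M3meet x y : M3 L :=
  exist _ (tmeet (sval x) (sval y)) (balanced_tmeet (svalP x) (svalP y)).

Lemma M3meet_glb x y : is_glb M3_le x y (M3meet x y).
Proof.
split; [|split]; first by apply/M3_leP; case: (tle_tmeet (sval x) (sval y)).
  by apply/M3_leP; case: (tle_tmeet (sval x) (sval y)).
by move=> u /M3_leP/and3P[ux1 ux2 ux3] /M3_leP/and3P[uy1 uy2 uy3];
  apply/M3_leP/and3P; rewrite /= !lexI ux1 ux2 ux3 uy1 uy2 uy3.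
Qed.

Definition M3join (distrL : distributive_lattice L) x y : M3 L :=
  exist _ (tjoin (sval x) (sval y)) (balanced_tclosure distrL _).

Lemma M3join_lub distrL x y : is_lub M3_le x y (M3join distrL x y).
Proof.
split; [|split].
- by apply/M3_leP; case: (tle_tjoin (sval x) (sval y)).
- by apply/M3_leP; case: (tle_tjoin (sval x) (sval y)).
by move=> u /M3_leP xu /M3_leP yu; apply/M3_leP; exact: tjoin_le (svalP u) xu yu.
Qed.

Lemma M3_lattice_ops distrL : lattice_ops M3_le (M3join distrL) M3meet.
Proof. by split=> x y; [exact: M3join_lub | exact: M3meet_glb]. Qed.

Lemma balanced_diag (a : L) : balanced (a, a, a).
Proof. by rewrite /balanced eqxx. Qed.

Definition M3diag (a : L) : M3 L := exist _ (a, a, a) (balanced_diag a).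

Lemma M3meet_diag a b : M3meet (M3diag a) (M3diag b) = M3diag (a `&` b).
Proof. exact: M3_inj. Qed.

Lemma is_lub_diag a b s : is_lub M3_le (M3diag a) (M3diag b) s -> s = M3diag (a `|` b).
Proof.
move=> [/M3_leP/and3P[as1 as2 as3] [/M3_leP/and3P[bs1 bs2 bs3] sl]].
apply: M3_le_anti; first by apply: sl; apply/M3_leP; rewrite /tle /= ?leUl ?leUr.
by apply/M3_leP/and3P; rewrite /= !leUx as1 as2 as3 bs1 bs2 bs3.
Qed.

End M3Lattice.

Section M3Modular.
Context {d : Order.disp_t} {L : latticeType d} (join meet : M3 L -> M3 L -> M3 L).
Hypothesis opsM : lattice_ops M3_le join meet.
Hypothesis modM : modular_identity M3_le join meet.

Lemma M3_meetE x y : meet x y = M3meet x y.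
Proof. exact: (is_glb_uniq (@M3_le_anti _ L) (proj2 opsM x y) (M3meet_glb x y)). Qed.

Lemma modular_of_M3_modular : modular_identity (fun x y : L => x <= y) Order.join Order.meet.
Proof.
move=> x y z xz; have joinE a b : join (M3diag a) (M3diag b) = M3diag (a `|` b).
  exact: is_lub_diag (proj1 opsM _ _).
have xz_diag : M3_le (M3diag x) (M3diag z) by apply/M3_leP; rewrite /tle /= xz.
have := @modM _ (M3diag y) _ xz_diag.
rewrite !M3_meetE !M3meet_diag !joinE !M3meet_diag.
by move/(congr1 (fun t => (sval t).2)).
Qed.

Lemma diamond_free_of_M3_modular : diamond_free L.
Proof.
move=> a b c /balancedP[/= eab eac]; set v := a `&` b.
have va : v <= a by exact: leIl.
have vc : v <= c by rewrite /v eab leIr.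
have vb : v <= b by exact: leIr.
have bX : balanced (v, v, a) by apply/balancedP; rewrite /= meetxx (meet_idPl va).
have bY : balanced (a, c, v).
  by apply/balancedP; rewrite /= !(meet_idPr va) (meet_idPr vc) -eab.
have bZ : balanced (v, b, a).
  by apply/balancedP; rewrite /= (meet_idPl va) (meet_idPl vb) meetC.
pose X : M3 L := exist balanced _ bX; pose Y : M3 L := exist balanced _ bY.
pose Z : M3 L := exist balanced _ bZ.
have XZ : M3_le X Z by apply/M3_leP; rewrite /tle /= !lexx vb.
have YZX : M3_le (meet Y Z) X.
  by rewrite M3_meetE; apply/M3_leP; rewrite /tle /= !leIr andbT meetC -eac -eab lexx.
have /M3_leP/and3P[_ /= sb_v _] : M3_le (meet (join X Y) Z) X.
  rewrite -modM //; have [_ [_ lub]] := proj1 opsM X (meet Y Z).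
  exact: lub (M3_le_refl X) YZX.
move: sb_v; rewrite M3_meetE /= => sb_v; apply: le_trans sb_v; rewrite leI2 //.
have [/M3_leP/and3P[_ _ /= as3] [/M3_leP/and3P[/= as1 cs2 _] _]] := proj1 opsM X Y.
have /balancedP[s12 _] := svalP (join X Y).
have : a <= (sval (join X Y)).1.1 `&` (sval (join X Y)).2 by rewrite lexI as1 as3.
by rewrite leUx cs2 andbT -s12 lexI => /andP[].
Qed.

End M3Modular.

Lemma M3_modular_distributive {d : Order.disp_t} (L : latticeType d) :
  is_modular_lattice (@M3_le d L) -> distributive_lattice L.
Proof.
move=> [join [meet [opsM modM]]].
exact: diamond_free_distributive (modular_of_M3_modular opsM modM)
  (diamond_free_of_M3_modular opsM modM).
Qed.

Section Plane.
Variable F : fieldType.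
Local Open Scope ring_scope.
Implicit Types (s t : bool * bool * bool) (v : F^o * F^o).

(* The five balanced triples form M3[2] = M_3, whose atoms go to the two axes
   and the diagonal of [F^2]; the values at unbalanced triples are junk. *)
Definition plane_mem t v : bool :=
  match t with
  | (true, true, _) => true
  | (true, false, _) => v.2 == 0
  | (false, true, _) => v.1 == 0
  | (false, false, true) => v.1 == v.2
  | (false, false, false) => (v.1 == 0) && (v.2 == 0)
  end.

Ltac decide_plane p q :=
  have [?|] := eqVneq p q; try subst q; have [?|] := eqVneq p 0; try subst p;
  try (have [?|] := eqVneq q 0; try subst q);
  repeat match goal with
  | H : is_true (?x != ?x) |- _ => by rewrite eqxx in H
  | H : is_true (?x != ?y) |- _ => rewrite ?(negbTE H) ?(eq_sym y x) ?(negbTE H); clear H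
  end; rewrite ?eqxx ?andbT ?andbF.

Ltac plane_witness :=
  by rewrite /= ?subr0 ?subrr ?subKr ?eqxx ?andbT ?oner_eq0 ?[0 == 1]eq_sym ?oner_eq0.

Lemma plane_mem0 t : plane_mem t 0.
Proof. by move: t => [[[] []] []]; rewrite /= ?eqxx. Qed.

Lemma plane_subspace t : balanced t -> is_subspace (plane_mem t).
Proof.
move=> bt; split=> [|a [p q] [p' q']]; first exact: plane_mem0.
move: t bt => [[[] []] []] //= _.
- by move=> /eqP-> /eqP->; rewrite scaler0 addr0.
- by move=> /eqP-> /eqP->; rewrite scaler0 addr0.
- by move=> /eqP-> /eqP->.
- by move=> /andP[/eqP-> /eqP->] /andP[/eqP-> /eqP->]; rewrite scaler0 addr0 eqxx.
Qed.

Lemma plane_mono s t v : balanced s -> balanced t -> tle s t -> plane_mem s v -> plane_mem t v.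
Proof.
case: v => p q; move: s t => [[[] []] []] [[[] []] []] //= _ _ _;
  by move=> /andP[/eqP p0 /eqP q0]; rewrite ?p0 ?q0 eqxx.
Qed.

Lemma plane_tmeet s t v : balanced s -> balanced t ->
  plane_mem (tmeet s t) v = plane_mem s v && plane_mem t v.
Proof.
case: v => p q; move: s t => [[[] []] []] [[[] []] []] //= _ _; by decide_plane p q.
Qed.

Lemma plane_split s t v : balanced s -> balanced t -> plane_mem (tjoin s t) v ->
  exists u, plane_mem s u && plane_mem t (v - u).
Proof.
case: v => p q; move: s t => [[[] []] []] [[[] []] []] //= _ _ vst;
  solve [ exists 0; plane_witness | exists (p, q); plane_witness
        | exists (p, 0); plane_witness | exists (0, q); plane_witness
        | exists (p - q, 0); plane_witness | exists (0, q - p); plane_witness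
        | exists (q, q); plane_witness | exists (p, p); plane_witness ].
Qed.

Lemma plane_sep s t : balanced s -> balanced t -> ~~ tle s t ->
  exists v, plane_mem s v && ~~ plane_mem t v.
Proof.
move: s t => [[[] []] []] [[[] []] []] //= _ _ _;
  solve [ exists (1, 0); plane_witness | exists (0, 1); plane_witness
        | exists (1, 1); plane_witness ].
Qed.

End Plane.

Lemma bool_distributive : distributive_lattice bool.
Proof. by do 3 case. Qed.

Definition M3_bool_join := M3join bool_distributive.

Definition balanced_bools : seq (bool * bool * bool) :=
  [:: (false, false, false); (true, false, false); (false, true, false);
      (false, false, true); (true, true, true)].

Lemma balanced_boolsP t : balanced t -> t \in balanced_bools.
Proof. by move: t => [[[] []] []]. Qed.

(* A boolean copy of [arguesian_identity], so that it can be evaluated. *)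
Definition tle_arguesian (a0 a1 a2 b0 b1 b2 : bool * bool * bool) : bool :=
  let c0 := tmeet (tjoin a1 a2) (tjoin b1 b2) in
  let c1 := tmeet (tjoin a0 a2) (tjoin b0 b2) in
  let c2 := tmeet (tjoin a0 a1) (tjoin b0 b1) in
  let c := tmeet c2 (tjoin c0 c1) in
  tle (tmeet (tmeet (tjoin a0 b0) (tjoin a1 b1)) (tjoin a2 b2))
      (tjoin a0 (tmeet b0 (tjoin c b1))).

Lemma M3_bool_arguesian : arguesian_identity M3_le M3_bool_join M3meet.
Proof.
have all_ok : all (fun a0 => all (fun a1 => all (fun a2 => all (fun b0 =>
    all (fun b1 => all (fun b2 => tle_arguesian a0 a1 a2 b0 b1 b2)
    balanced_bools) balanced_bools) balanced_bools) balanced_bools)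
    balanced_bools) balanced_bools by vm_compute.
move=> [a0 A0] [a1 A1] [a2 A2] [b0 B0] [b1 B1] [b2 B2]; apply/M3_leP.
move: all_ok => /allP/(_ _ (balanced_boolsP A0))/allP/(_ _ (balanced_boolsP A1)).
move=> /allP/(_ _ (balanced_boolsP A2))/allP/(_ _ (balanced_boolsP B0)).
by move=> /allP/(_ _ (balanced_boolsP B1))/allP/(_ _ (balanced_boolsP B2)).
Qed.

Section PlaneEmbedding.
Variable F : fieldType.
Local Open Scope ring_scope.

Definition plane (t : M3 bool) : F^o * F^o -> Prop := fun v => plane_mem (sval t) v.

Lemma plane_le s t : (forall v, plane s v -> plane t v) -> M3_le s t.
Proof.
move=> st; apply/M3_leP; apply: contraT => /(plane_sep F (svalP s) (svalP t))[v].
by case/andP=> /st ->.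
Qed.

Lemma plane_embedding : subspace_lattice_embedding M3_le plane.
Proof.
split; [|split; [|split]].
- by move=> t; exact: (plane_subspace F (svalP t)).
- by move=> s t st; apply: M3_le_anti; apply: plane_le => v /st.
- move=> s t r /(is_lub_uniq (@M3_le_anti _ bool) (M3join_lub bool_distributive s t)) <- v.
  split=> [/(plane_split (svalP s) (svalP t))[u /andP[su tvu]]|[u [w [su [tw ->]]]]].
    by exists u, (v - u); rewrite subrKC.
  have [_ closed] := plane_subspace F (svalP (M3_bool_join s t)).
  have [st_j tt_j] := tle_tjoin (sval s) (sval t).
  rewrite -[u]scale1r; apply: closed.
    exact: plane_mono (svalP s) (svalP (M3_bool_join s t)) st_j su.
  exact: plane_mono (svalP t) (svalP (M3_bool_join s t)) tt_j tw.
- move=> s t m /(is_glb_uniq (@M3_le_anti _ bool) (M3meet_glb s t)) <- v.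
  change (plane_mem (tmeet (sval s) (sval t)) v <->
          plane_mem (sval s) v /\ plane_mem (sval t) v).
  by rewrite (plane_tmeet v (svalP s) (svalP t)); split=> /andP.
Qed.

End PlaneEmbedding.

Definition bool_hom {d : Order.disp_t} (L : latticeType d) := {h : L -> bool | bool_morph h}.

Section M3Power.
Context {d : Order.disp_t} {L : latticeType d} (distrL : distributive_lattice L).

Definition M3proj (h : bool_hom L) (x : M3 L) : M3 bool :=
  exist _ (tmap (sval h) (sval x)) (balanced_tmap (svalP h) (svalP x)).

Lemma M3proj_join h x y :
  M3proj h (M3join distrL x y) = M3_bool_join (M3proj h x) (M3proj h y).
Proof. exact/M3_inj/(tmap_tjoin (svalP h)). Qed.

Lemma M3proj_meet h x y : M3proj h (M3meet x y) = M3meet (M3proj h x) (M3proj h y).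
Proof. exact/M3_inj/(tmap_tmeet (svalP h)). Qed.

Lemma M3proj_reflect x y : (forall h, M3_le (M3proj h x) (M3proj h y)) -> M3_le x y.
Proof.
move=> le_h; apply/M3_leP; apply: (tle_sep distrL) => h hm.
by have /M3_leP := le_h (exist _ h hm).
Qed.

Lemma M3_arguesian : arguesian_identity M3_le (M3join distrL) M3meet.
Proof.
exact: arguesian_of_power_embedding M3proj_join M3proj_meet M3proj_reflect M3_bool_arguesian.
Qed.

Lemma M3_subspace_embedding (F : fieldType) :
  exists (V : lmodType F) (f : M3 L -> V -> Prop), subspace_lattice_embedding M3_le f.
Proof.
do 2 eexists; exact: (subspace_embedding_of_power_embedding M3proj_join M3proj_meet M3proj_reflect
  (@M3_le_anti _ L) (M3_lattice_ops distrL) (M3_lattice_ops bool_distributive)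
  (plane_embedding F)).
Qed.

End M3Power.

Lemma M3_arguesian_modular {d : Order.disp_t} (L : latticeType d) :
  is_arguesian_lattice (@M3_le d L) -> is_modular_lattice (@M3_le d L).
Proof.
move=> [join [meet [ops arg]]]; exists join, meet; split=> //.
exact: (arguesian_modular (@M3_le_refl _ L) (@M3_le_trans _ L) (@M3_le_anti _ L) ops arg).
Qed.

Lemma M3_distributive_arguesian {d : Order.disp_t} (L : latticeType d) :
  distributive_lattice L -> is_arguesian_lattice (@M3_le d L).
Proof.
move=> distrL; exists (M3join distrL), M3meet.
by split; [exact: M3_lattice_ops | exact: M3_arguesian].
Qed.

Theorem proposition6p5 (d : Order.disp_t) (L : latticeType d) :
  (distributive_lattice L <-> is_modular_lattice (@M3_le d L)) /\
  (distributive_lattice L <-> is_arguesian_lattice (@M3_le d L)) /\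
  (distributive_lattice L ->
     forall F : fieldType, exists (V : lmodType F) (f : M3 L -> V -> Prop),
       subspace_lattice_embedding (@M3_le d L) f).
Proof.
split; [|split].
- split=> [/M3_distributive_arguesian/M3_arguesian_modular //|].
  exact: M3_modular_distributive.
- split=> [|/M3_arguesian_modular]; first exact: M3_distributive_arguesian.
  exact: M3_modular_distributive.
- by move=> distrL F; exact: M3_subspace_embedding.
Qed.
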